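(* Let $0 \neq q \in \mathbb{C}$ with $q^{2} \neq 1$, let $\xi = -(1+q)^{2}/(q-q^{-1})$, and let $a, b, c$ be elements of an associative algebra over $\mathbb{C}$ satisfying $$ac = q^{2} ca + \xi b^{2}, \qquad ab = q^{2} ba, \qquad bc = q^{2} cb.$$ Define complex numbers $\phi_{\beta}$, $\beta \in \mathbb{Z}_{+}$, recursively by $\phi_{0} = 1$, $\phi_{1} = 1$, and $\phi_{\beta} = \phi_{\beta-1} + \xi [\beta-1]_{q^{2}} \phi_{\beta-2}$ for $\beta \geq 2$. Then for every $n \in \mathbb{N}$, $$(a + b + c)^{n} = \sum_{\substack{\alpha,\beta,\gamma \in \mathbb{Z}_{+}\\ \alpha + \beta + \gamma = n}} \frac{ [n]_{q^{2}}!\, \phi_{\beta} }{ [\alpha]_{q^{2}}!\, [\beta]_{q^{2}}!\, [\gamma]_{q^{2}}! }\; c^{\alpha} b^{\beta} a^{\gamma}.$$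
   Context: $\mathbb{N} = \{1,2,3,\ldots\}$ and $\mathbb{Z}_{+} = \mathbb{N}\cup\{0\}$. For $0 \neq p \in \mathbb{C}$ with $p \neq 1$ and $n \in \mathbb{Z}_{+}$: $[n]_{p} = \frac{1-p^{n}}{1-p}$, $[n]_{p}! = [n]_{p}[n-1]_{p}\cdots[1]_{p}$, and $[0]_{p}! = 1$; here these are used with $p = q^{2}$. *)

From HB Require Import structures.
From mathcomp Require Import all_boot all_order all_algebra.
From Stdlib Require Rdefinitions.
From mathcomp Require Import Rstruct.
From mathcomp.real_closed Require Import complex.
Set Implicit Arguments. Unset Strict Implicit. Unset Printing Implicit Defensive.
Import Order.TTheory GRing.Theory Num.Theory.
Local Open Scope ring_scope.

Definition C : fieldType := (Rdefinitions.R)[i].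

(* [n]_p = (1 - p^n)/(1 - p)   (used with p <> 1) *)
Definition qint (p : C) (n : nat) : C := (1 - p ^+ n) / (1 - p).

Definition qfact (p : C) (n : nat) : C := \prod_(1 <= k < n.+1) qint p k.

Fixpoint phi_aux (xi p : C) (n : nat) : C * C :=
  (* returns (phi_n, phi_(n+1)) *)
  match n with
  | 0 => (1, 1)
  | m.+1 => let: (x, y) := phi_aux xi p m in
            (y, y + xi * qint p m.+1 * x)
  end.
Definition phi (xi p : C) (n : nat) : C := (phi_aux xi p n).1.

(* The q-multinomial coefficient [n]_t! / ([al]_t! [be]_t! [ga]_t!) as a
   formal quotient: computed in {poly C} with [k]_t = 1 + t + ... + t^(k-1)
   (the polynomial identity (1-t^k)/(1-t)), where the division is exact, and
   then evaluated at t = p. *)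
Definition qint_poly (k : nat) : {poly C} := \sum_(i < k) 'X^i.
Definition qfact_poly (k : nat) : {poly C} := \prod_(1 <= j < k.+1) qint_poly j.
Definition qmultinom (p : C) (al be ga : nat) : C :=
  ((qfact_poly (al + be + ga)) %/
     (qfact_poly al * qfact_poly be * qfact_poly ga)).[p].

(* Write (a + b + c)^n in the normal order c^i b^j a^g and induct on n,
   multiplying on the right by a + b + c.  Moving a or b to the right end of
   c^i b^j a^g only costs powers of q^2, whereas moving c through a^g also
   produces the term xi q^(2(g-1)) [g] b^2 a^(g-1).  Hence the coefficients
   obey a four-term recurrence.  The q-multinomial part of the
   claimed coefficient obeys the three-term q-Pascal rule, which comes from
   [i+j+g] = [g] + t^g [j] + t^(g+j) [i] for the polynomial q-integers, and
   the b^2 term is absorbed by the recursion of phi through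
   [j+1] M(i,j+1,g) = [g+1] M(i,j,g+1). *)

From HB Require Import structures.
From mathcomp Require Import all_boot all_order all_algebra.
From mathcomp Require Import ring zify.
Set Implicit Arguments.
Unset Strict Implicit.
Import GRing.Theory.
Local Open Scope ring_scope.

Lemma qint_polyD m k : qint_poly (m + k) = qint_poly m + 'X^m * qint_poly k.
Proof.
rewrite /qint_poly big_split_ord /= mulr_sumr; congr (_ + _).
by apply: eq_bigr => i _; rewrite exprD.
Qed.

Lemma qint_poly0 : qint_poly 0 = 0.
Proof. by rewrite /qint_poly big_ord0. Qed.

Lemma qint_polyS k : qint_poly k.+1 = 1 + 'X * qint_poly k.
Proof. by rewrite -add1n qint_polyD /qint_poly big_ord1 expr0 expr1. Qed.

Lemma qint_polyS_neq0 k : qint_poly k.+1 != 0.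
Proof.
apply/eqP => /(congr1 (horner^~ 0)).
by rewrite qint_polyS !hornerE; apply/eqP; rewrite oner_eq0.
Qed.

Lemma qint_poly_add3 i j g :
  qint_poly (i + j + g) = qint_poly g + 'X^g * qint_poly j + 'X^(g + j) * qint_poly i.
Proof. by rewrite addnC (addnC i) !qint_polyD exprD; ring. Qed.

Lemma qfact_poly0 : qfact_poly 0 = 1.
Proof. by rewrite /qfact_poly big_geq. Qed.

Lemma qfact_polyS k : qfact_poly k.+1 = qfact_poly k * qint_poly k.+1.
Proof. by rewrite /qfact_poly big_nat_recr. Qed.

Lemma qfact_poly_neq0 k : qfact_poly k != 0.
Proof.
elim: k => [|k IHk]; first by rewrite qfact_poly0 oner_eq0.
by rewrite qfact_polyS mulf_neq0 // qint_polyS_neq0.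
Qed.

Definition qmultinom_den i j g := qfact_poly i * qfact_poly j * qfact_poly g.

Definition qmultinom_poly i j g := qfact_poly (i + j + g) %/ qmultinom_den i j g.

Lemma qmultinom_den_neq0 i j g : qmultinom_den i j g != 0.
Proof. by rewrite !mulf_neq0 // qfact_poly_neq0. Qed.

Lemma qmultinom_denSl i j g : qmultinom_den i.+1 j g = qmultinom_den i j g * qint_poly i.+1.
Proof. by rewrite /qmultinom_den qfact_polyS; ring. Qed.

Lemma qmultinom_denSm i j g : qmultinom_den i j.+1 g = qmultinom_den i j g * qint_poly j.+1.
Proof. by rewrite /qmultinom_den qfact_polyS; ring. Qed.

Lemma qmultinom_denSr i j g : qmultinom_den i j g.+1 = qmultinom_den i j g * qint_poly g.+1.
Proof. by rewrite /qmultinom_den qfact_polyS; ring. Qed.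

Lemma qmultinom_den_dvd i j g : qmultinom_den i j g %| qfact_poly (i + j + g).
Proof.
suff: forall N, (i + j + g)%N = N -> qmultinom_den i j g %| qfact_poly N by apply.
move=> N; elim: N i j g => [|N IHN] i j g EN.
  have [-> -> ->] : [/\ i = 0, j = 0 & g = 0]%N by split; lia.
  by rewrite /qmultinom_den qfact_poly0 !mul1r dvdpp.
rewrite qfact_polyS -EN qint_poly_add3 !mulrDr.
apply: dvdp_add; first apply: dvdp_add.
- case: g EN => [|g] EN; first by rewrite qint_poly0 mulr0 dvdp0.
  by rewrite qmultinom_denSr dvdp_mul // IHN //; lia.
- case: j EN => [|j] EN; first by rewrite qint_poly0 !mulr0 dvdp0.
  by rewrite qmultinom_denSm mulrCA dvdp_mull // dvdp_mul // IHN //; lia.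
- case: i EN => [|i] EN; first by rewrite qint_poly0 !mulr0 dvdp0.
  by rewrite qmultinom_denSl mulrCA dvdp_mull // dvdp_mul // IHN //; lia.
Qed.

Lemma qmultinom_polyK i j g :
  qmultinom_poly i j g * qmultinom_den i j g = qfact_poly (i + j + g).
Proof. exact/divpK/qmultinom_den_dvd. Qed.

Lemma qmultinom_poly000 : qmultinom_poly 0 0 0 = 1.
Proof. by rewrite /qmultinom_poly /qmultinom_den qfact_poly0 !mul1r divp1. Qed.

Lemma qmultinom_poly_pascal i j g : (0 < i + j + g)%N ->
  qmultinom_poly i j g =
    (if g is g'.+1 then qmultinom_poly i j g' else 0)
    + (if j is j'.+1 then 'X^g * qmultinom_poly i j' g else 0)
    + (if i is i'.+1 then 'X^(g + j) * qmultinom_poly i' j g else 0).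
Proof.
case EN: (i + j + g)%N => [|N] // _.
have KN k l h : (k + l + h)%N = N ->
    qfact_poly N = qmultinom_poly k l h * qmultinom_den k l h.
  by move=> <-; rewrite qmultinom_polyK.
apply: (mulIf (qmultinom_den_neq0 i j g)).
rewrite qmultinom_polyK EN qfact_polyS -EN qint_poly_add3 !mulrDl !mulrDr.
congr (_ + _ + _).
- case: g EN => [|g] EN; first by rewrite qint_poly0 !mul0r mulr0.
  by rewrite qmultinom_denSr (KN i j g); [ring | lia].
- case: j EN => [|j] EN; first by rewrite qint_poly0 !mul0r !mulr0.
  by rewrite qmultinom_denSm (KN i j g); [ring | lia].
- case: i EN => [|i] EN; first by rewrite qint_poly0 !mul0r !mulr0.
  by rewrite qmultinom_denSl (KN i j g); [ring | lia].
Qed.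

Lemma qmultinom_poly_exchange i j g :
  qint_poly j.+1 * qmultinom_poly i j.+1 g = qint_poly g.+1 * qmultinom_poly i j g.+1.
Proof.
have E1 := qmultinom_polyK i j.+1 g; have E2 := qmultinom_polyK i j g.+1.
rewrite qmultinom_denSm addnS addSn in E1; rewrite qmultinom_denSr addnS in E2.
apply: (mulIf (qmultinom_den_neq0 i j g)).
transitivity (qmultinom_poly i j.+1 g * (qmultinom_den i j g * qint_poly j.+1)); first by ring.
by rewrite E1 -E2; ring.
Qed.

Lemma qint0 p : qint p 0 = 0.
Proof. by rewrite /qint expr0 subrr mul0r. Qed.

Lemma phi0 xi p : phi xi p 0 = 1.
Proof. by []. Qed.

Lemma phi1 xi p : phi xi p 1 = 1.
Proof. by []. Qed.

Lemma phiSS xi p j : phi xi p j.+2 = phi xi p j.+1 + xi * qint p j.+1 * phi xi p j.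
Proof. by rewrite /phi /=; case: (phi_aux xi p j). Qed.

Section Coefficients.
Variables (p xi : C).
Hypothesis hp : p != 1.

Lemma qintS k : qint p k.+1 = 1 + p * qint p k.
Proof. by rewrite /qint exprS; field; rewrite subr_eq0 eq_sym. Qed.

Lemma horner_qint_poly k : (qint_poly k).[p] = qint p k.
Proof.
elim: k => [|k IHk]; first by rewrite qint_poly0 qint0 hornerC.
by rewrite qintS -IHk qint_polyS !hornerE.
Qed.

Lemma qmultinomE i j g : qmultinom p i j g = (qmultinom_poly i j g).[p].
Proof. by []. Qed.

Lemma qmultinom_pascal i j g : (0 < i + j + g)%N ->
  qmultinom p i j g =
    (if g is g'.+1 then qmultinom p i j g' else 0)
    + (if j is j'.+1 then p ^+ g * qmultinom p i j' g else 0)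
    + (if i is i'.+1 then p ^+ (g + j) * qmultinom p i' j g else 0).
Proof.
move=> /qmultinom_poly_pascal E; rewrite qmultinomE {}E.
by case: g => [|g]; case: j => [|j]; case: i => [|i]; rewrite /= !hornerE.
Qed.

Lemma qmultinom_exchange i j g :
  qint p j.+1 * qmultinom p i j.+1 g = qint p g.+1 * qmultinom p i j g.+1.
Proof. by rewrite -!horner_qint_poly !qmultinomE -!hornerM qmultinom_poly_exchange. Qed.

Definition tcoef i j g := qmultinom p i j g * phi xi p j.

Lemma qmultinom_phiS i j g :
  p ^+ g * qmultinom p i j g * phi xi p j.+1 =
    tcoef i j g * p ^+ g
    + (if j is j'.+1 then tcoef i j' g.+1 * (xi * p ^+ g * qint p g.+1) else 0).
Proof.
case: j => [|j]; first by rewrite /tcoef phi0 phi1 addr0; ring.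
rewrite phiSS /tcoef !mulrDr; congr (_ + _); first by ring.
transitivity (p ^+ g * xi * phi xi p j * (qint p j.+1 * qmultinom p i j.+1 g)); first by ring.
by rewrite qmultinom_exchange; ring.
Qed.

Lemma tcoef_rec i j g : (0 < i + j + g)%N ->
  tcoef i j g =
    (if g is g'.+1 then tcoef i j g' else 0)
    + (if j is j'.+1 then tcoef i j' g * p ^+ g else 0)
    + (if i is i'.+1 then tcoef i' j g * p ^+ (g + j) else 0)
    + (if j is j'.+2 then tcoef i j' g.+1 * (xi * p ^+ g * qint p g.+1) else 0).
Proof.
move=> /qmultinom_pascal E; rewrite {1}/tcoef {}E !mulrDl.
case: j => [|[|j]]; rewrite ?qmultinom_phiS.
all: by case: g => [|g]; case: i => [|i]; rewrite /tcoef; cbv iota; ring.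
Qed.

Lemma tcoef000 : tcoef 0 0 0 = 1.
Proof. by rewrite /tcoef qmultinomE qmultinom_poly000 hornerC phi0 mulr1. Qed.

Definition tcoefn n i j g := if (i + j + g == n)%N then tcoef i j g else 0.

Lemma tcoefn_rec n i j g :
  tcoefn n.+1 i j g =
    (if g is g'.+1 then tcoefn n i j g' else 0)
    + (if j is j'.+1 then tcoefn n i j' g * p ^+ g else 0)
    + (if i is i'.+1 then tcoefn n i' j g * p ^+ (g + j) else 0)
    + (if j is j'.+2 then tcoefn n i j' g.+1 * (xi * p ^+ g * qint p g.+1) else 0).
Proof.
rewrite {1}/tcoefn; have [E|NE] := eqVneq (i + j + g)%N n.+1.
  rewrite tcoef_rec ?E // /tcoefn.
  by case: g E => [|g] E; case: j E => [|[|j]] E; case: i E => [|i] E;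
    cbv iota; rewrite ?ifT //; lia.
rewrite /tcoefn.
by case: g NE => [|g] NE; case: j NE => [|[|j]] NE; case: i NE => [|i] NE;
  cbv iota; rewrite ?ifF ?mul0r ?addr0 //; lia.
Qed.

Lemma tcoefn_out n i j g : (n < i + j + g)%N -> tcoefn n i j g = 0.
Proof. by move=> h; rewrite /tcoefn ifF //; lia. Qed.

End Coefficients.

Section QCommutation.
Variables (R : comNzRingType) (A : algType R) (k : R) (x y : A).
Hypothesis hxy : x * y = k *: (y * x).

Lemma qcommXl n : x ^+ n * y = k ^+ n *: (y * x ^+ n).
Proof.
elim: n => [|n IHn]; first by rewrite !expr0 mul1r mulr1 scale1r.
rewrite exprSr -mulrA hxy -scalerAr [x ^+ n * (y * x)]mulrA IHn -scalerAl scalerA -mulrA.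
by rewrite -exprS.
Qed.

Lemma qcommXr n : x * y ^+ n = k ^+ n *: (y ^+ n * x).
Proof.
elim: n => [|n IHn]; first by rewrite !expr0 mul1r mulr1 scale1r.
rewrite exprSr mulrA IHn -scalerAl -[y ^+ n * x * y]mulrA hxy -scalerAr scalerA mulrA.
by rewrite -!exprSr.
Qed.

End QCommutation.

Lemma big_nat_shift (V : nmodType) N (u v : nat -> V) :
  v 0%N = 0 -> (forall x, v x.+1 = u x) -> u N = 0 ->
  \sum_(0 <= x < N.+1) v x = \sum_(0 <= x < N.+1) u x.
Proof.
move=> v0 vS uN; rewrite big_nat_recl // big_nat_recr //= v0 uN add0r addr0.
by apply: eq_bigr => x _.
Qed.

Lemma big_nat_shift2 (V : nmodType) N (u v : nat -> V) :
  v 0%N = 0 -> v 1%N = 0 -> (forall x, v x.+2 = u x) -> u N = 0 -> u N.+1 = 0 ->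
  \sum_(0 <= x < N.+2) v x = \sum_(0 <= x < N.+2) u x.
Proof.
move=> v0 v1 vSS uN uSN.
rewrite (@big_nat_shift _ _ (fun x => v x.+1)) ?vSS //.
exact: big_nat_shift.
Qed.

Section GridSum.
Variable V : nmodType.

Definition gridsum K (F : nat -> nat -> nat -> V) :=
  \sum_(0 <= i < K) \sum_(0 <= j < K) \sum_(0 <= g < K) F i j g.

Lemma eq_gridsum K (F1 F2 : nat -> nat -> nat -> V) :
  (forall i j g, F1 i j g = F2 i j g) -> gridsum K F1 = gridsum K F2.
Proof. by move=> eF; apply: eq_bigr => i _; apply: eq_bigr => j _; apply: eq_bigr. Qed.

Lemma gridsumD K (F1 F2 : nat -> nat -> nat -> V) :
  gridsum K (fun i j g => F1 i j g + F2 i j g) = gridsum K F1 + gridsum K F2.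
Proof.
rewrite /gridsum -big_split; apply: eq_bigr => i _.
by rewrite -big_split; apply: eq_bigr => j _; rewrite -big_split.
Qed.

End GridSum.

Lemma gridsum_mulr (R : pzRingType) K (F : nat -> nat -> nat -> R) x :
  gridsum K F * x = gridsum K (fun i j g => F i j g * x).
Proof.
rewrite /gridsum mulr_suml; apply: eq_bigr => i _.
by rewrite mulr_suml; apply: eq_bigr => j _; rewrite mulr_suml.
Qed.

Section NormalOrdering.
Variables (A : algType C) (p xi : C) (a b c : A).
Hypothesis hp : p != 1.
Hypothesis hac : a * c = p *: (c * a) + xi *: b ^+ 2.
Hypothesis hab : a * b = p *: (b * a).
Hypothesis hbc : b * c = p *: (c * b).

Lemma exprS_mulc g : a ^+ g.+1 * c =
  p ^+ g.+1 *: (c * a ^+ g.+1) + (xi * p ^+ g * qint p g.+1) *: (b ^+ 2 * a ^+ g).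
Proof.
elim: g => [|g IHg].
  by rewrite !expr1 expr0 hac qintS // qint0 mulr0 addr0 !mulr1.
rewrite exprS -mulrA IHg mulrDr -!scalerAr [a * (c * _)]mulrA [a * (b ^+ 2 * _)]mulrA.
rewrite hac (qcommXr hab) mulrDl -!scalerAl -[c * a * _]mulrA -[b ^+ 2 * a * _]mulrA.
rewrite -!exprS scalerDr !scalerA -addrA -scalerDl.
congr (_ *: _ + _ *: _); first by rewrite -exprSr.
by rewrite (qintS hp g.+1) !exprS; ring.
Qed.

Definition monom i j g := c ^+ i * b ^+ j * a ^+ g.

Lemma monom_mula i j g : monom i j g * a = monom i j g.+1.
Proof. by rewrite /monom exprSr !mulrA. Qed.

Lemma monom_mulb i j g : monom i j g * b = p ^+ g *: monom i j.+1 g.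
Proof. by rewrite /monom -mulrA (qcommXl hab) -scalerAr exprSr !mulrA. Qed.

Lemma monom_mulc i j g : monom i j g * c =
  p ^+ (g + j) *: monom i.+1 j g + (xi * p ^+ g.-1 * qint p g) *: monom i j.+2 g.-1.
Proof.
rewrite /monom -mulrA; case: g => [|g].
  rewrite qint0 mulr0 scale0r addr0 add0n !expr0 mul1r !mulr1 -mulrA (qcommXl hbc).
  by rewrite -scalerAr mulrA -exprSr.
rewrite exprS_mulc mulrDr -!scalerAr [_ * (c * _)]mulrA [_ * (b ^+ 2 * _)]mulrA.
rewrite -[c ^+ i * b ^+ j * c]mulrA (qcommXl hbc) -scalerAr -scalerAl scalerA.
rewrite [c ^+ i * (c * _)]mulrA -exprSr -[c ^+ i * b ^+ j * b ^+ 2]mulrA -exprD addn2.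
by rewrite exprD.
Qed.

(* The expansion is summed over the whole cube [0,K)^3, K > n, so that right
   multiplication by a, b, c becomes a shift of one index. *)
Definition expansion K n := gridsum K (fun i j g => tcoefn p xi n i j g *: monom i j g).

Lemma sum_tcoefn_monom K n i j : (n < K)%N ->
  \sum_(0 <= g < K) tcoefn p xi n i j g *: monom i j g =
    if (i + j <= n)%N then tcoef p xi i j (n - i - j) *: monom i j (n - i - j) else 0.
Proof.
move=> ltnK; under eq_bigr => g _ do rewrite /tcoefn (fun_if (fun t => t *: _)) scale0r.
rewrite -big_mkcond; case: leqP => hij.
  rewrite (eq_bigl (fun g => g == n - i - j)%N) ?big_nat1_eq ?ifT //; first lia.
  by move=> g; apply/eqP/eqP; lia.
by rewrite big_pred0 // => g; apply/eqP; lia.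
Qed.

Lemma expansion0 K : (0 < K)%N -> expansion K 0 = 1.
Proof.
case: K => // K _; rewrite /expansion /gridsum.
rewrite big_nat_recl // [X in _ + X]big1 ?addr0 => [|i _]; last first.
  by apply: big1 => j _; apply: big1 => g _; rewrite tcoefn_out ?scale0r //; lia.
rewrite big_nat_recl // [X in _ + X]big1 ?addr0 => [|j _]; last first.
  by apply: big1 => g _; rewrite tcoefn_out ?scale0r //; lia.
rewrite big_nat_recl // [X in _ + X]big1 ?addr0 => [|g _]; last first.
  by rewrite tcoefn_out ?scale0r //; lia.
by rewrite /tcoefn eqxx tcoef000 scale1r /monom !expr0 !mulr1.
Qed.

Lemma expansionS K n : (n.+1 < K)%N -> expansion K n * (a + b + c) = expansion K n.+1.
Proof.
case: K => [|[|K]] // /ltnSE leKn.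
rewrite /expansion gridsum_mulr.
transitivity (
    gridsum K.+2 (fun i j g => tcoefn p xi n i j g *: monom i j g.+1)
  + gridsum K.+2 (fun i j g => (tcoefn p xi n i j g * p ^+ g) *: monom i j.+1 g)
  + gridsum K.+2 (fun i j g => (tcoefn p xi n i j g * p ^+ (g + j)) *: monom i.+1 j g)
  + gridsum K.+2 (fun i j g =>
      (tcoefn p xi n i j g * (xi * p ^+ g.-1 * qint p g)) *: monom i j.+2 g.-1)).
  rewrite -!gridsumD; apply: eq_gridsum => i j g.
  by rewrite -scalerAl !mulrDr monom_mula monom_mulb monom_mulc !scalerDr !scalerA !addrA.
under [RHS]eq_gridsum => i j g do rewrite (tcoefn_rec _ hp) !scalerDl.
rewrite !gridsumD /gridsum; congr (_ + _ + _ + _).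
- apply: eq_bigr => i _; apply: eq_bigr => j _; symmetry.
  apply: big_nat_shift => [|//|]; first by rewrite scale0r.
  by rewrite tcoefn_out ?scale0r //; lia.
- apply: eq_bigr => i _; symmetry; apply: big_nat_shift => [|//|].
    by apply: big1 => g _; rewrite scale0r.
  by apply: big1 => g _; rewrite tcoefn_out ?mul0r ?scale0r //; lia.
- symmetry; apply: big_nat_shift => [|//|].
    by apply: big1 => j _; apply: big1 => g _; rewrite scale0r.
  by apply: big1 => j _; apply: big1 => g _; rewrite tcoefn_out ?mul0r ?scale0r //; lia.
- apply: eq_bigr => i _.
  transitivity (\sum_(0 <= j < K.+2) \sum_(0 <= g < K.+2)
      (tcoefn p xi n i j g.+1 * (xi * p ^+ g * qint p g.+1)) *: monom i j.+2 g).
    apply: eq_bigr => j _; apply: big_nat_shift => [|//|].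
      by rewrite qint0 !mulr0 scale0r.
    by rewrite tcoefn_out ?mul0r ?scale0r //; lia.
  symmetry; apply: big_nat_shift2 => [||//||].
  + by apply: big1 => g _; rewrite scale0r.
  + by apply: big1 => g _; rewrite scale0r.
  + by apply: big1 => g _; rewrite tcoefn_out ?mul0r ?scale0r //; lia.
  + by apply: big1 => g _; rewrite tcoefn_out ?mul0r ?scale0r //; lia.
Qed.

Lemma expansionE K n : (n < K)%N -> (a + b + c) ^+ n = expansion K n.
Proof.
elim: n => [|n IHn] ltnK; first by rewrite expr0 expansion0.
by rewrite exprSr IHn ?expansionS //; lia.
Qed.

End NormalOrdering.

Theorem lemma2 (A : algType C) (q : C) (a b c : A)
  (hq0 : q != 0) (hq2 : q ^+ 2 != 1)
  (hac : a * c = q ^+ 2 *: (c * a)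
                 + (- (1 + q) ^+ 2 / (q - q^-1)) *: (b ^+ 2))
  (hab : a * b = q ^+ 2 *: (b * a))
  (hbc : b * c = q ^+ 2 *: (c * b))
  (n : nat) (hn : (0 < n)%N) :
  (a + b + c) ^+ n =
  \sum_(al < n.+1) \sum_(be < n.+1 | (al + be <= n)%N)
     (qmultinom (q ^+ 2) al be (n - al - be)
        * phi (- (1 + q) ^+ 2 / (q - q^-1)) (q ^+ 2) be)
       *: (c ^+ al * b ^+ be * a ^+ (n - al - be)).
Proof.
rewrite (expansionE hq2 hac hab hbc (ltnSn n)) /expansion /gridsum big_mkord.
apply: eq_bigr => i _; rewrite big_mkord [RHS]big_mkcond; apply: eq_bigr => j _.
by rewrite sum_tcoefn_monom.
Qed.
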